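(* Let $K$ be a finite simplicial complex with an orientation $\sigma$ and a weight function $w$, and let $i\ge 0$. Then $$\lambda_{\max}(\mathcal L_i^{up}(K))\le \lambda_{\max}(\mathcal Q_i^{up}(K)),$$ with equality if $(B_i(K),\sigma)$ is balanced. If moreover $B_i(K)$ is connected (i.e. $K$ is $(i+1)$-path connected in the paper's sense), then equality holds if and only if $(B_i(K),\sigma)$ is balanced.
   Context: A simplicial complex $K$ is a family of subsets of a finite vertex set closed under subsets, containing $\emptyset$; $S_j(K)$ is the set of faces of cardinality $j+1$. An orientation assigns to each face an ordering of its vertices up to even permutations. For an oriented $(i+1)$-face $[\bar F]=[v_0,\dots,v_{i+1}]$ and an oriented $i$-face $[F]$, $\mathrm{sgn}([F],\partial[\bar F])=\pm(-1)^j$ if $F=\bar F\setminus\{v_j\}$ (sign $+$ iff $[F]$ has the orientation $[v_0,\dots,\hat v_j,\dots,v_{i+1}]$), and $0$ if $F\not\subset \bar F$. A weight function $w:K\to\mathbb R_{>0}$ gives diagonal matrices $W_j=\mathrm{diag}(w(F))_{F\in S_j(K)}$. $D_i$ is the $S_{i+1}(K)\times S_i(K)$ matrix with entries $\mathrm{sgn}([F],\partial[\bar F])$. The $i$-up Laplacian is $\mathcal L_i^{up}(K)=W_i^{-1}D_i^\top W_{i+1}D_i$ and the $i$-up signless Laplacian is $\mathcal Q_i^{up}(K)=W_i^{-1}|D_i|^\top W_{i+1}|D_i|$, where $|A|$ is the entrywise absolute value. Both have real spectra (they are self-adjoint w.r.t. the inner product $\sum_F w(F)f(F)g(F)$), and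 $\lambda_{\max}$ denotes the largest eigenvalue. The incidence graph $B_i(K)$ is the bipartite graph on $S_i(K)\cup S_{i+1}(K)$ with edges $\{F,\bar F\}$ for $F\subset\bar F$, signed by $\mathrm{sgn}([F],\partial[\bar F])$. A signed graph is balanced if every cycle has positive sign (product of its edge signs). *)

From HB Require Import structures.
From mathcomp Require Import all_boot all_order all_algebra.
From mathcomp Require Import reals.

Set Implicit Arguments.
Unset Strict Implicit.
Unset Printing Implicit Defensive.

Import Order.TTheory GRing.Theory Num.Theory.
Local Open Scope ring_scope.

Section SimplicialDefs.
Variable V : finType.

Definition simplicial_complex (K : {set {set V}}) : Prop :=
  set0 \in K /\ forall F G : {set V}, F \in K -> G \subset F -> G \in K.

Definition S (K : {set {set V}}) (j : nat) : {set {set V}} :=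
  [set F in K | #|F| == j.+1].

(* An orientation is given by choosing, for each face, an ordering of its
   vertices (a duplicate-free list enumerating it); two orderings give the same
   orientation iff they differ by an even permutation. *)
Definition orientation (K : {set {set V}}) (o : {set V} -> seq V) : Prop :=
  forall F, F \in K -> perm_eq (o F) (enum F).

(* Two orderings of the same finite set represent the same
   orientation iff their inversion counts have the same parity. *)
Fixpoint inv_count (s : seq V) : nat :=
  match s with
  | [::] => 0
  | x :: s' => (count (fun y => enum_rank y < enum_rank x) s' + inv_count s')%N
  end.

(* sgn([F], d[Fb]) for the orientation o: if [Fb] = [v_0,...,v_{i+1}] (the list
   o Fb) and F = Fb \ {v_j}, this is (-1)^j, times +1 iff [F] (the list o F)
   has the orientation of [v_0,...,^v_j,...,v_{i+1}] (the list o Fb with v_j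
   removed), and -1 otherwise; it is 0 if F is not a codimension-1 face of Fb. *)
Definition sgn (R : numDomainType) (o : {set V} -> seq V) (F Fb : {set V}) : R :=
  if (F \subset Fb) && (#|Fb| == #|F|.+1) then
    (-1) ^+ (find (fun x => x \notin F) (o Fb)) *
    (-1) ^+ (odd (inv_count (o F)) (+) odd (inv_count [seq x <- o Fb | x \in F]))
  else 0.

Definition face (K : {set {set V}}) (j : nat) (k : 'I_#|S K j|) : {set V} :=
  enum_val k.

Variable R : realType.

Definition Wmx (K : {set {set V}}) (w : {set V} -> R) (j : nat)
  : 'M[R]_#|S K j| :=
  diag_mx (\row_k w (face k)).

Definition Dmx (K : {set {set V}}) (o : {set V} -> seq V) (i : nat)
  : 'M[R]_(#|S K i.+1|, #|S K i|) :=
  \matrix_(a, b) sgn R o (face b) (face a).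

Definition Lup (K : {set {set V}}) (o : {set V} -> seq V) (w : {set V} -> R)
  (i : nat) : 'M[R]_#|S K i| :=
  invmx (Wmx K w i) *m (Dmx K o i)^T *m Wmx K w i.+1 *m Dmx K o i.

Definition Qup (K : {set {set V}}) (o : {set V} -> seq V) (w : {set V} -> R)
  (i : nat) : 'M[R]_#|S K i| :=
  let aD := map_mx (fun x : R => `|x|) (Dmx K o i) in
  invmx (Wmx K w i) *m aD^T *m Wmx K w i.+1 *m aD.

Definition is_lambda_max (n : nat) (M : 'M[R]_n) (l : R) : Prop :=
  eigenvalue M l /\ forall m, eigenvalue M m -> m <= l.

End SimplicialDefs.

Section IncidenceGraph.
Variable V : finType.

Definition B_adj (K : {set {set V}}) (i : nat) : rel {set V} :=
  fun F G =>
    [&& F \in S K i, G \in S K i.+1 & F \subset G] ||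
    [&& G \in S K i, F \in S K i.+1 & G \subset F].

Definition B_sign (R : numDomainType) (o : {set V} -> seq V) (F G : {set V}) : R :=
  if (#|F| < #|G|)%N then sgn R o F G else sgn R o G F.

Definition cycle_sign (R : numDomainType) (o : {set V} -> seq V) (c : seq {set V}) : R :=
  \prod_(p <- zip c (rot 1 c)) B_sign R o p.1 p.2.

Definition balanced (R : numDomainType) (K : {set {set V}}) (o : {set V} -> seq V)
  (i : nat) : Prop :=
  forall c : seq {set V}, uniq c -> (3 <= size c)%N -> cycle (B_adj K i) c ->
    0 < cycle_sign R o c.

Definition B_connected (K : {set {set V}}) (i : nat) : Prop :=
  forall F G, F \in S K i :|: S K i.+1 -> G \in S K i :|: S K i.+1 ->
    connect (B_adj K i) F G.

End IncidenceGraph.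

(* The i-up Laplacian and signless Laplacian are W_i^-1 G and W_i^-1 G' with
   G = D^T W_{i+1} D and G' = |D|^T W_{i+1} |D|, so their largest eigenvalues
   are the maxima of the Rayleigh quotients  sum_b w_b (sum_a D_ba g_a)^2 / sum_a w_a g_a^2
   and its analogue for |D|, and the maximisers are exactly the eigenvectors.
   The triangle inequality gives R_L(g) <= R_Q(|g|), hence lambda_L <= lambda_Q.
   If the signed incidence graph is balanced it has a switching function s with
   sgn(F, dFb) = s(F) s(Fb); multiplying g by s turns R_Q(g) into R_L(s g), so
   equality holds.  Conversely, if lambda_L = lambda_Q and y maximises R_L, then
   |y| maximises R_Q, so it is a nonnegative eigenvector of the signless
   Laplacian; a zero entry of |y| propagates to all faces sharing a coface, so by
   connectivity y has no zero entry.  Equality in each triangle inequality then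
   forces sgn(F, dFb) = sign(D y)_Fb * sign(y_F), a switching function. *)

From HB Require Import structures.
From mathcomp Require Import all_boot all_order all_algebra.
From mathcomp Require Import reals.
From mathcomp Require Import ring lra zify.
From mathcomp Require Import boolp classical_sets topology normedtype derive.
Import Order.TTheory GRing.Theory Num.Theory.
Import numFieldNormedType.Exports.
Set Implicit Arguments.
Unset Strict Implicit.
Unset Printing Implicit Defensive.
Local Open Scope ring_scope.

Section QuadraticForms.
Variables (R : realDomainType) (n : nat).
Implicit Types (A : 'M[R]_n) (d : 'I_n -> R) (g x v : 'rV[R]_n).

Definition bform A x v := \sum_a \sum_c x ord0 a * A a c * v ord0 c.
Definition qform A g := bform A g g.
Definition wdot d x v := \sum_a d a * (x ord0 a * v ord0 a).
Definition wnorm2 d g := wdot d g g.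
Local Notation W d := (diag_mx (\row_a d a)).

Lemma bformC A x v : A^T = A -> bform A v x = bform A x v.
Proof.
move=> sA; rewrite /bform exchange_big; apply: eq_bigr => a _; apply: eq_bigr => c _.
have -> : A c a = A a c by rewrite -[in LHS]sA mxE.
ring.
Qed.

Lemma wdotC d x v : wdot d v x = wdot d x v.
Proof. by apply: eq_bigr => a _; rewrite (mulrC (v _ _)). Qed.

Lemma qformDZ A x v t : qform A (x + t *: v) =
  qform A x + t * (bform A x v + bform A v x) + t ^+ 2 * qform A v.
Proof.
rewrite /qform /bform mulrDr !mulr_sumr -!big_split /=; apply: eq_bigr => a _.
rewrite !mulr_sumr -!big_split /=; apply: eq_bigr => c _; rewrite !mxE; ring.
Qed.

Lemma wnorm2DZ d x v t : wnorm2 d (x + t *: v) =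
  wnorm2 d x + t * (wdot d x v + wdot d v x) + t ^+ 2 * wnorm2 d v.
Proof.
rewrite /wnorm2 /wdot mulrDr !mulr_sumr -!big_split /=; apply: eq_bigr => a _.
rewrite !mxE; ring.
Qed.

Lemma qformZ A t g : qform A (t *: g) = t ^+ 2 * qform A g.
Proof.
rewrite /qform /bform mulr_sumr; apply: eq_bigr => a _; rewrite mulr_sumr.
by apply: eq_bigr => c _; rewrite !mxE; ring.
Qed.

Lemma wnorm2Z d t g : wnorm2 d (t *: g) = t ^+ 2 * wnorm2 d g.
Proof. by rewrite /wnorm2 /wdot mulr_sumr; apply: eq_bigr => a _; rewrite !mxE; ring. Qed.

Lemma qform0 A : qform A 0 = 0.
Proof. by rewrite /qform /bform big1 // => a _; rewrite big1 // => c _; rewrite mxE !mul0r. Qed.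

Lemma wnorm20 d : wnorm2 d 0 = 0.
Proof. by rewrite /wnorm2 /wdot big1 // => a _; rewrite mxE !mulr0. Qed.

Lemma wnorm2_abs d g : wnorm2 d (map_mx Num.norm g) = wnorm2 d g.
Proof. by apply: eq_bigr => a _; rewrite mxE -!expr2 real_normK ?num_real. Qed.

Lemma bform_delta A x j : bform A x (delta_mx 0 j) = (x *m A) ord0 j.
Proof.
rewrite mxE; apply: eq_bigr => a _; rewrite (bigD1 j) //= big1 => [|c /negbTE cj].
  by rewrite mxE !eqxx mulr1 addr0.
by rewrite mxE cj andbF mulr0.
Qed.

Lemma wdot_delta d x j : wdot d x (delta_mx 0 j) = (x *m W d) ord0 j.
Proof.
rewrite mul_mx_diag !mxE /wdot (bigD1 j) //= big1 => [|a /negbTE aj].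
  by rewrite mxE !eqxx mulr1 addr0 mulrC.
by rewrite mxE aj andbF !mulr0.
Qed.

Lemma qform_eigen A d y c : y *m A = c *: (y *m W d) -> qform A y = c * wnorm2 d y.
Proof.
move=> eig; rewrite /qform /bform exchange_big /wnorm2 /wdot mulr_sumr.
apply: eq_bigr => j _; rewrite -mulr_suml.
have := congr1 (fun M : 'rV_n => M ord0 j) eig; rewrite mul_mx_diag !mxE => ->.
ring.
Qed.

Section PositiveWeights.
Variable d : 'I_n -> R.
Hypothesis d_gt0 : forall a, 0 < d a.

Lemma wnorm2_ge0 g : 0 <= wnorm2 d g.
Proof. by apply: sumr_ge0 => a _; rewrite mulr_ge0 ?(ltW (d_gt0 a)) // -expr2 sqr_ge0. Qed.

Lemma wnorm2_eq0 g : (wnorm2 d g == 0) = (g == 0).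
Proof.
apply/idP/eqP => [|->]; last by rewrite wnorm20.
rewrite psumr_eq0 => [/allP g0|a _]; last by rewrite mulr_ge0 ?(ltW (d_gt0 a)) // -expr2 sqr_ge0.
apply/rowP => a; have := g0 a (mem_index_enum a).
by rewrite mxE mulf_eq0 gt_eqF //= mulf_eq0 orbb => /eqP.
Qed.

Lemma wnorm2_gt0 g : g != 0 -> 0 < wnorm2 d g.
Proof. by move=> g0; rewrite lt0r wnorm2_eq0 g0 wnorm2_ge0. Qed.

End PositiveWeights.
End QuadraticForms.

Lemma quad_ge0_lin_eq0 (R : realFieldType) (b p : R) :
  0 <= p -> (forall t, 0 <= 2 * t * b + t ^+ 2 * p) -> b = 0.
Proof.
move=> p0 h; have p1 : 0 < p + 1 by rewrite ltr_wpDl.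
set u := (p + 1)^-1; have u0 : 0 < u by rewrite invr_gt0.
have up : u * p = 1 - u by rewrite -[p in LHS](addrK 1) mulrBr mulVf ?mulr1 // gt_eqF.
have : 0 <= - (b ^+ 2 * (u * (1 + u))).
  have -> : - (b ^+ 2 * (u * (1 + u))) = 2 * - (b * u) * b + (- (b * u)) ^+ 2 * p.
    have -> : (- (b * u)) ^+ 2 * p = b ^+ 2 * u * (u * p) by ring.
    rewrite up; ring.
  exact: h.
have uu : 0 < u * (1 + u) by rewrite mulr_gt0 // ltr_wpDr // ltW.
rewrite oppr_ge0 pmulr_lle0 // => b2.
by apply/eqP; rewrite -sqrf_eq0 eq_le b2 sqr_ge0.
Qed.

Section Rayleigh.
Variables (R : realType) (n : nat) (A : 'M[R]_n) (d : 'I_n -> R).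
Hypothesis d_gt0 : forall a, 0 < d a.
Local Notation W := (diag_mx (\row_a d a)).
Local Open Scope classical_set_scope.

Lemma continuous_mulr (f h : 'rV[R]_n -> R) :
  continuous f -> continuous h -> continuous (fun x => f x * h x).
Proof. by move=> cf ch x; exact: (continuousM (cf x) (ch x)). Qed.

Lemma continuous_qform : continuous (qform A).
Proof.
apply: continuous_big => [|a _]; first exact: add_continuous.
apply: continuous_big => [|c _]; first exact: add_continuous.
apply: continuous_mulr; last exact: coord_continuous.
by apply: continuous_mulr; [exact: coord_continuous | exact: cst_continuous].
Qed.

Lemma continuous_wnorm2 : continuous (wnorm2 d).
Proof.
apply: continuous_big => [|a _]; first exact: add_continuous.
apply: continuous_mulr; first exact: cst_continuous.
by apply: continuous_mulr; exact: coord_continuous.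
Qed.

Lemma qform_max_on_wsphere : (0 < n)%N ->
  exists2 u : 'rV[R]_n, wnorm2 d u = 1 &
    forall g, wnorm2 d g = 1 -> qform A g <= qform A u.
Proof.
move=> n0; pose c a := 1 + (d a)^-1.
pose box := [set v : 'rV[R]_n | forall a, `[- c a, c a]%classic (v ord0 a)].
pose C := box `&` (wnorm2 d @^-1` [set 1]).
have sphere_box g : wnorm2 d g = 1 -> box g.
  move=> g1 a; rewrite /= in_itv /= -ler_norml.
  have : d a * (g ord0 a * g ord0 a) <= 1.
    rewrite -g1 /wnorm2 /wdot (bigD1 a) //= lerDl sumr_ge0 // => b _.
    by rewrite mulr_ge0 ?(ltW (d_gt0 b)) // -expr2 sqr_ge0.
  rewrite -ler_pdivlMl // mulr1 -expr2 -real_normK ?num_real // /c.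
  have : 0 < (d a)^-1 by rewrite invr_gt0.
  move: `|g ord0 a| ((d a)^-1) (normr_ge0 (g ord0 a)) => x y; nra.
have cC : compact C.
  apply: compact_closedI.
    by apply: (@rV_compact _ n (fun b => `[- c b, c b])) => b; exact: segment_compact.
  by have /continuous_closedP := continuous_wnorm2; apply; exact: closed_eq.
have C0 : C !=set0.
  pose e := \row_a (if a == Ordinal n0 then Num.sqrt (d a)^-1 else 0).
  suff e1 : wnorm2 d e = 1 by exists e; split => //; exact: sphere_box.
  rewrite /wnorm2 /wdot (bigD1 (Ordinal n0)) //= big1 => [|b /negbTE b0]; last first.
    by rewrite mxE b0 !mul0r mulr0.
  rewrite mxE eqxx -expr2 sqr_sqrtr ?invr_ge0 ?ltW // divff ?addr0 //.
  exact: lt0r_neq0.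
have [u uC umax] := EVT_max_rV C0 cC (continuous_subspaceT continuous_qform).
exists u; first by move: uC; rewrite inE => -[].
by move=> g g1; apply: umax; rewrite inE; split => //; exact: sphere_box.
Qed.

Lemma qform_le_wsphere_max r : (forall g, wnorm2 d g = 1 -> qform A g <= r) ->
  forall g, qform A g <= r * wnorm2 d g.
Proof.
move=> rmax g; have [-> | g0] := eqVneq g 0.
  by rewrite qform0 wnorm20 mulr0.
have ng := wnorm2_gt0 d_gt0 g0; set t := (Num.sqrt (wnorm2 d g))^-1.
have t2 : t ^+ 2 = (wnorm2 d g)^-1 by rewrite exprVn sqr_sqrtr // ltW.
have := rmax (t *: g); rewrite wnorm2Z qformZ t2 mulVf ?gt_eqF // => /(_ erefl).
by rewrite ler_pdivrMl // mulrC.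
Qed.

Lemma qform_max_stationary r x : A^T = A ->
  (forall g, qform A g <= r * wnorm2 d g) -> qform A x = r * wnorm2 d x ->
  x *m A = r *: (x *m W).
Proof.
move=> sA rmax xmax; apply/rowP => j; rewrite [RHS]mxE.
pose v : 'rV[R]_n := delta_mx 0 j.
pose gap g := r * wnorm2 d g - qform A g.
have gap_ge0 g : 0 <= gap g by rewrite subr_ge0.
suff : r * wdot d x v - bform A x v = 0.
  by rewrite wdot_delta bform_delta => /eqP; rewrite subr_eq0 => /eqP.
apply: (quad_ge0_lin_eq0 (gap_ge0 v)) => t.
have := gap_ge0 (x + t *: v); rewrite /gap qformDZ wnorm2DZ (bformC x v sA) (wdotC d x v) xmax.
by congr (0 <= _); ring.
Qed.

Lemma eigenvalue_wpencil c : eigenvalue (invmx W *m A) c <->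
  exists2 y : 'rV[R]_n, y != 0 & y *m A = c *: (y *m W).
Proof.
have Wu : W \in unitmx.
  by rewrite unitmxE det_diag unitfE; apply/prodf_neq0 => a _; rewrite mxE gt_eqF.
split => [/eigenvalueP [v vA v0] | [y y0 yA]].
  exists (v *m invmx W); last by rewrite mulmxKV // -mulmxA vA.
  by apply: contraNneq v0 => v0; rewrite -(mulmxKV Wu v) v0 mul0mx.
apply/eigenvalueP; exists (y *m W); first by rewrite mulmxA mulmxK // yA.
by apply: contraNneq y0 => yW0; rewrite -(mulmxK Wu y) yW0 mul0mx.
Qed.

Lemma rayleigh_lambda_max l : A^T = A -> is_lambda_max (invmx W *m A) l ->
  [/\ forall g, qform A g <= l * wnorm2 d g,
      exists2 y, y != 0 & qform A y = l * wnorm2 d y &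
      forall g, qform A g = l * wnorm2 d g -> g *m A = l *: (g *m W)].
Proof.
move=> sA [/eigenvalue_wpencil [y y0 yA] lmax].
have n_gt0 : (0 < n)%N.
  case: (pickP (fun j => y ord0 j != 0)) => [j _ | y_eq0]; first exact: leq_ltn_trans (ltn_ord j).
  by case/eqP: y0; apply/rowP => j; rewrite mxE; apply/eqP/negbFE/y_eq0.
have [u u1 umax] := qform_max_on_wsphere n_gt0.
have bound := qform_le_wsphere_max umax.
have u0 : u != 0 by apply: contra_eq_neq u1 => ->; rewrite wnorm20 eq_sym oner_neq0.
have ueig : u *m A = qform A u *: (u *m W).
  by apply: qform_max_stationary => //; rewrite u1 mulr1.
have r_le_l : qform A u <= l by apply/lmax/eigenvalue_wpencil; exists u.
have l_le_r : l <= qform A u.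
  by have := bound y; rewrite (qform_eigen yA) ler_pM2r // wnorm2_gt0.
have <- : qform A u = l by apply/le_anti; rewrite r_le_l l_le_r.
split=> // [|g gmax]; first by exists u; rewrite // u1 mulr1.
exact: qform_max_stationary.
Qed.

End Rayleigh.

Lemma not_uniq_split (T : eqType) (s : seq T) : ~~ uniq s ->
  exists s1 y s2 s3, s = s1 ++ y :: s2 ++ y :: s3.
Proof.
elim: s => [|z s IH] //=; rewrite negb_and negbK; case: (boolP (z \in s)) => [zs _|_ /= us].
  by case/splitPr: zs => p1 p2; exists [::], z, p1, p2.
by have [s1 [y [s2 [s3 ->]]]] := IH us; exists (z :: s1), y, s2, s3.
Qed.

Section SignedGraph.
Variables (T : finType) (R : numDomainType) (e : rel T) (sigma : T -> T -> R).
Hypothesis e_sym : symmetric e.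
Hypothesis e_irr : irreflexive e.
Hypothesis sigma_sym : forall x y, sigma x y = sigma y x.
Hypothesis sigma_sqr : forall x y, e x y -> sigma x y ^+ 2 = 1.

Definition cycle_balanced :=
  forall c : seq T, uniq c -> (3 <= size c)%N -> cycle e c ->
    0 < \prod_(p <- zip c (rot 1 c)) sigma p.1 p.2.

Fixpoint walk_sign (x : T) (p : seq T) : R :=
  if p is y :: p' then sigma x y * walk_sign y p' else 1.

Lemma cycle_sign_walk x s :
  \prod_(p <- zip (x :: s) (rot 1 (x :: s))) sigma p.1 p.2 = walk_sign x (rcons s x).
Proof.
rewrite rot1_cons; elim: s x {2 4}x => [|y s IH] x z /=.
  by rewrite big_cons big_nil.
by rewrite big_cons /= IH.
Qed.

Lemma walk_sign_cat x p q : walk_sign x (p ++ q) = walk_sign x p * walk_sign (last x p) q.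
Proof. by elim: p x => [|y p IH] x /=; rewrite ?mul1r // IH mulrA. Qed.

Lemma walk_sign_rcons x p z : walk_sign x (rcons p z) = walk_sign x p * sigma (last x p) z.
Proof. by rewrite -cats1 walk_sign_cat /= mulr1. Qed.

Lemma walk_sign_rev x p : walk_sign x p = walk_sign (last x p) (rev (belast x p)).
Proof.
elim/last_ind: p => [|p z IH] //=.
rewrite walk_sign_rcons last_rcons belast_rcons (lastI x p) rev_rcons /= -IH.
by rewrite sigma_sym mulrC.
Qed.

Lemma walk_sign_sqr x p : path e x p -> walk_sign x p ^+ 2 = 1.
Proof.
elim: p x => [|y p IH] x /=; first by rewrite expr1n.
by case/andP => exy hp; rewrite exprMn sigma_sqr // IH // mulr1.
Qed.

Lemma closed_walk_sign_gt0 : cycle_balanced ->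
  forall x p, path e x p -> last x p = x -> 0 < walk_sign x p.
Proof.
move=> bal x p; have [k] := ubnP (size p); elim: k x p => // k IH x p.
case: (boolP (uniq p)) => [up | /not_uniq_split [s1 [y [s2 [s3 ->]]]]]; last first.
  rewrite -cat_rcons -cat_rcons.
  rewrite !size_cat !size_rcons !cat_path !walk_sign_cat !last_cat !last_rcons.
  move=> sz /and3P[p1 p2 p3] lx.
  have outer : 0 < walk_sign x (rcons s1 y ++ s3).
    by apply: IH; rewrite ?size_cat ?size_rcons ?cat_path ?last_cat ?last_rcons ?p1 //; lia.
  rewrite walk_sign_cat last_rcons in outer.
  rewrite mulrCA mulr_gt0 //; apply: IH; rewrite ?size_rcons ?last_rcons //; lia.
case/lastP: p up => [|s z] up _; first by rewrite ltr01.
rewrite last_rcons => hp zx; subst z.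
case: s up hp => [|y [|y' s]] up hp.
- by move: hp; rewrite /= e_irr.
- by move: hp => /= /andP[exy _]; rewrite mulr1 sigma_sym -expr2 sigma_sqr ?ltr01 // e_sym.
- rewrite -cycle_sign_walk; apply: bal => //.
  by move: up; rewrite -rot1_cons rot_uniq.
Qed.

Lemma balanced_switching : cycle_balanced -> exists s : T -> R,
  (forall x, s x ^+ 2 = 1) /\ (forall x y, e x y -> sigma x y = s x * s y).
Proof.
move=> bal; have csym := sym_connect_sym e_sym.
have to_root x : exists p, path e x p && (last x p == fingraph.root e x).
  by case/connectP: (connect_root e x) => p hp hl; exists p; rewrite hp -hl eqxx.
pose tp x := xchoose (to_root x).
have tpP x : path e x (tp x) && (last x (tp x) == fingraph.root e x) := xchooseP (to_root x).
exists (fun x => walk_sign x (tp x)); split.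
  by move=> x; apply: walk_sign_sqr; case/andP: (tpP x).
move=> x y exy; have /(fingraph.rootP csym) rxy := connect1 exy.
case/andP: (tpP x) => hp /eqP lp; case/andP: (tpP y) => hq /eqP lq.
set p := tp x in hp lp *; set q := tp y in hq lq *.
have lx : last (last x p) (rev (belast x p)) = x.
  by case: (p) => [|z r] //=; rewrite rev_cons last_rcons.
(* the closed walk x, y, then q up to the common root, then p reversed back to x *)
have := closed_walk_sign_gt0 bal (x := x) (p := y :: q ++ rev (belast x p)).
rewrite /= exy cat_path hq last_cat lq -rxy -lp rev_path lx.
have flip : (fun z => e^~ z) =2 e by move=> a b; rewrite /= e_sym.
rewrite (eq_path flip) hp => /(_ isT erefl).
rewrite walk_sign_cat lq -rxy -lp -walk_sign_rev => pos.
have sx := walk_sign_sqr hp; have sy := walk_sign_sqr hq.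
have : (sigma x y * (walk_sign y q * walk_sign x p)) ^+ 2 == 1.
  by rewrite !exprMn sx sy sigma_sqr // !mulr1.
rewrite sqrp_eq1 ?ltW // => /eqP one.
rewrite -[RHS]mul1r -one -[LHS]mulr1 -sx -[LHS]mulr1 -sy; ring.
Qed.

Lemma switching_balanced (s : T -> R) : (forall x, s x ^+ 2 = 1) ->
  (forall x y, e x y -> sigma x y = s x * s y) -> cycle_balanced.
Proof.
move=> s2 hs [|x c] _ _ hc; first by rewrite big_nil ltr01.
have walk y p : path e y p -> walk_sign y p = s y * s (last y p).
  elim: p y => [|z p IH] y /=; first by rewrite -expr2 s2.
  case/andP => eyz hp; rewrite hs // IH //.
  by rewrite mulrA -(mulrA (s y)) -expr2 s2 mulr1.
by rewrite cycle_sign_walk walk // last_rcons -expr2 s2 ltr01.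
Qed.

End SignedGraph.

Lemma norm_sum_eq_sign (R : realDomainType) (I : finType) (x : I -> R) :
  `|\sum_a x a| = \sum_a `|x a| ->
  forall a, `|x a| = (-1) ^+ (\sum_c x c < 0)%R * x a.
Proof.
set sg := (-1) ^+ _ => eq_norm a.
have gap_ge0 c : 0 <= `|x c| - sg * x c.
  by rewrite subr_ge0 (le_trans (ler_norm _)) // normrM normr_sign mul1r.
have : \sum_c (`|x c| - sg * x c) = 0.
  by rewrite sumrB -mulr_sumr -normrEsign eq_norm subrr.
by move/eqP; rewrite psumr_eq0 // => /allP/(_ a (mem_index_enum a)); rewrite subr_eq0 => /eqP.
Qed.

Section Gram.
Variables (R : realDomainType) (m n : nat) (D : 'M[R]_(m, n)) (e : 'I_m -> R).
Hypothesis e_gt0 : forall b, 0 < e b.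

Definition gram (M : 'M[R]_(m, n)) := M^T *m diag_mx (\row_b e b) *m M.
Local Notation absD := (map_mx Num.norm D).
Local Notation absv g := (map_mx Num.norm g).

Lemma gram_sym M : (gram M)^T = gram M.
Proof. by rewrite /gram !trmx_mul trmxK tr_diag_mx mulmxA. Qed.

Lemma gram_entry M a c : gram M a c = \sum_b M b a * e b * M b c.
Proof. by rewrite mxE; apply: eq_bigr => b _; rewrite mul_mx_diag !mxE. Qed.

Lemma qform_gram M g : qform (gram M) g = \sum_b e b * (\sum_a M b a * g ord0 a) ^+ 2.
Proof.
rewrite /qform /bform.
transitivity (\sum_a \sum_c \sum_b e b * ((M b a * g ord0 a) * (M b c * g ord0 c))).
  apply: eq_bigr => a _; apply: eq_bigr => c _; rewrite gram_entry mulr_sumr mulr_suml.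
  by apply: eq_bigr => b _; ring.
under eq_bigr do rewrite exchange_big.
rewrite exchange_big; apply: eq_bigr => b _.
rewrite expr2 mulr_suml mulr_sumr; apply: eq_bigr => a _.
by rewrite !mulr_sumr; apply: eq_bigr => c _.
Qed.

Lemma qform_gram_abs g :
  qform (gram absD) (absv g) = \sum_b e b * (\sum_a `|D b a * g ord0 a|) ^+ 2.
Proof.
rewrite qform_gram; apply: eq_bigr => b _; congr (_ * _ ^+ 2).
by apply: eq_bigr => a _; rewrite !mxE normrM.
Qed.

Lemma qform_gram_le_abs g : qform (gram D) g <= qform (gram absD) (absv g).
Proof.
rewrite qform_gram qform_gram_abs; apply: ler_sum => b _.
rewrite ler_pM2l // -real_normK ?num_real // lerXn2r ?nnegrE ?sumr_ge0 //.
exact: ler_norm_sum.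
Qed.

Lemma qform_gram_abs_eq g : qform (gram D) g = qform (gram absD) (absv g) ->
  forall b, `|\sum_a D b a * g ord0 a| = \sum_a `|D b a * g ord0 a|.
Proof.
move=> eq_q b; pose T b' := \sum_a D b' a * g ord0 a.
pose U b' := \sum_a `|D b' a * g ord0 a|.
have term_ge0 b' : 0 <= e b' * (U b' ^+ 2 - T b' ^+ 2).
  apply: mulr_ge0; first exact: ltW.
  rewrite subr_ge0 -real_normK ?num_real // lerXn2r ?nnegrE ?sumr_ge0 //.
  exact: ler_norm_sum.
have /eqP : \sum_b' e b' * (U b' ^+ 2 - T b' ^+ 2) = 0.
  rewrite -[RHS](subrr (qform (gram D) g)) {1}eq_q qform_gram_abs qform_gram -sumrB.
  by apply: eq_bigr => b' _; rewrite mulrBr.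
rewrite psumr_eq0 // => /allP/(_ b (mem_index_enum b)).
rewrite mulf_eq0 gt_eqF //= subr_eq0 => /eqP UT.
by apply/eqP; rewrite -(eqrXn2 (n := 2)) ?sumr_ge0 // real_normK ?num_real // -UT.
Qed.

Lemma qform_gram_switch (t : 'I_m -> R) (u : 'I_n -> R) (g : 'rV[R]_n) :
  (forall b, t b ^+ 2 = 1) -> (forall a, u a ^+ 2 = 1) ->
  (forall b a, D b a = t b * u a * `|D b a|) ->
  qform (gram D) (\row_a (u a * g ord0 a)) = qform (gram absD) g.
Proof.
move=> t2 u2 Dsw; rewrite !qform_gram; apply: eq_bigr => b _.
have -> : \sum_a D b a * (\row_a (u a * g ord0 a)) ord0 a = t b * \sum_a absD b a * g ord0 a.
  rewrite mulr_sumr; apply: eq_bigr => a _; rewrite !mxE {1}Dsw.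
  by transitivity (t b * (`|D b a| * g ord0 a) * u a ^+ 2); [ring | rewrite u2 mulr1].
by rewrite exprMn t2 mul1r.
Qed.

Lemma gram_abs_stationary_support (d : 'I_n -> R) (l : R) (g : 'rV[R]_n) j b c :
  (forall a, 0 <= g ord0 a) ->
  g *m gram absD = l *: (g *m diag_mx (\row_a d a)) ->
  g ord0 j = 0 -> D b j != 0 -> D b c != 0 -> g ord0 c = 0.
Proof.
move=> g_ge0 stat gj0 Dbj Dbc.
have entry_ge0 c' : 0 <= gram absD c' j.
  rewrite gram_entry; apply: sumr_ge0 => b' _; rewrite !mxE.
  exact: mulr_ge0 (mulr_ge0 (normr_ge0 _) (ltW (e_gt0 b'))) (normr_ge0 _).
have : (g *m gram absD) ord0 j = 0 by rewrite stat mul_mx_diag !mxE gj0 mul0r mulr0.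
rewrite mxE => /eqP; rewrite psumr_eq0 => [|c' _]; last exact: mulr_ge0.
move/allP/(_ c (mem_index_enum c)).
rewrite mulf_eq0 => /orP[/eqP // | ]; rewrite gram_entry psumr_eq0 => [|b' _]; last first.
  by rewrite !mxE; exact: mulr_ge0 (mulr_ge0 (normr_ge0 _) (ltW (e_gt0 b'))) (normr_ge0 _).
move/allP/(_ b (mem_index_enum b)).
by rewrite !mxE !mulf_eq0 !normr_eq0 (negbTE Dbc) (negbTE Dbj) gt_eqF.
Qed.
End Gram.

Section IncidenceGraph.
Variables (V : finType) (R : realDomainType) (K : {set {set V}}) (o : {set V} -> seq V) (i : nat).

Lemma card_S j X : X \in S K j -> #|X| = j.+1.
Proof. by rewrite inE => /andP[_ /eqP]. Qed.

Lemma sgn_sqr (F Fb : {set V}) :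
  sgn R o F Fb ^+ 2 = ((F \subset Fb) && (#|Fb| == #|F|.+1))%:R.
Proof.
by rewrite /sgn; case: ifP => _; rewrite ?expr0n // exprMn !sqrr_sign mulr1.
Qed.

Lemma B_adj_sym : symmetric (B_adj K i).
Proof. by move=> X Y; rewrite /B_adj orbC. Qed.

Lemma B_adjP X Y : B_adj K i X Y ->
  [/\ X \in S K i, Y \in S K i.+1 & X \subset Y] \/
  [/\ Y \in S K i, X \in S K i.+1 & Y \subset X].
Proof. by case/orP => /and3P[*]; [left | right]. Qed.

Lemma B_adj_irr : irreflexive (B_adj K i).
Proof.
move=> X; apply/negP => /B_adjP[] [/card_S c1 /card_S c2 _];
  by move: c2; rewrite c1 => /succn_inj/n_Sn.
Qed.

Lemma B_sign_sym X Y : B_sign R o X Y = B_sign R o Y X.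
Proof.
rewrite /B_sign; case: ltngtP => // eXY.
by rewrite /sgn eXY eqn_leq ltnn !andbF.
Qed.

Lemma B_sign_sqr X Y : B_adj K i X Y -> B_sign R o X Y ^+ 2 = 1.
Proof.
wlog [/card_S cX /card_S cY sXY] : X Y / [/\ X \in S K i, Y \in S K i.+1 & X \subset Y].
  move=> wlog eXY; case/B_adjP: (eXY) => h; first exact: wlog.
  by rewrite B_sign_sym; apply: wlog h _; rewrite B_adj_sym.
by rewrite /B_sign cX cY ltnSn sgn_sqr sXY cX cY eqxx.
Qed.

Lemma balanced_B_switching : balanced R K o i -> exists s : {set V} -> R,
  (forall X, s X ^+ 2 = 1) /\ (forall X Y, B_adj K i X Y -> B_sign R o X Y = s X * s Y).
Proof. exact: balanced_switching B_adj_sym B_adj_irr B_sign_sym B_sign_sqr. Qed.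

End IncidenceGraph.

Section Faces.
Variables (V : finType) (R : realType) (K : {set {set V}}) (o : {set V} -> seq V) (i : nat).

Local Notation n := #|S K i|.
Local Notation m := #|S K i.+1|.
Local Notation D := (Dmx R K o i).
Local Notation fa := (@face V K i).
Local Notation fb := (@face V K i.+1).

Lemma face_in_K j (k : 'I_#|S K j|) : face k \in K.
Proof. by have := enum_valP k; rewrite inE => /andP[]. Qed.

Lemma card_face j (k : 'I_#|S K j|) : #|face k| = j.+1.
Proof. exact/card_S/enum_valP. Qed.

Lemma face_onto j X : X \in S K j -> exists k : 'I_#|S K j|, face k = X.
Proof. by move=> hX; exists (enum_rank_in hX X); rewrite /face enum_rankK_in. Qed.

Lemma normDmx a b : `|D b a| = (fa a \subset fb b)%:R.
Proof.
have : D b a ^+ 2 = (fa a \subset fb b)%:R by rewrite mxE sgn_sqr !card_face eqxx andbT.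
case: (_ \subset _) => [|/eqP]; last by rewrite sqrf_eq0 => /eqP ->; rewrite normr0.
by move/eqP; rewrite -real_normK ?num_real // sqrp_eq1 // => /eqP.
Qed.

Lemma Dmx_eq0 a b : (D b a == 0) = ~~ (fa a \subset fb b).
Proof. by rewrite -normr_eq0 normDmx; case: (_ \subset _); rewrite ?oner_eq0 ?eqxx. Qed.

Lemma face_hi_notin_S b : (fb b \in S K i) = false.
Proof. by apply/negbTE/negP => /card_S; rewrite card_face => /succn_inj/esym/n_Sn. Qed.

Lemma B_adj_faces a b : B_adj K i (fa a) (fb b) = (fa a \subset fb b).
Proof. by rewrite /B_adj !enum_valP face_hi_notin_S /= orbF. Qed.

Lemma B_sign_faces a b : B_sign R o (fa a) (fb b) = D b a.
Proof. by rewrite /B_sign !card_face ltnSn mxE. Qed.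

Lemma Dmx_switch (s : {set V} -> R) a b :
  (forall X Y, B_adj K i X Y -> B_sign R o X Y = s X * s Y) ->
  D b a = s (fb b) * s (fa a) * `|D b a|.
Proof.
move=> sw; have [sab | nsab] := boolP (fa a \subset fb b).
  by rewrite normDmx sab mulr1 -B_sign_faces sw ?B_adj_faces // mulrC.
by move/eqP: (Dmx_eq0 a b); rewrite nsab => ->; rewrite normr0 mulr0.
Qed.

Lemma face_lo_sub_eq a c : fa c \subset fa a -> c = a.
Proof. by move=> sca; apply/enum_val_inj/eqP; rewrite eqEcard sca !card_face leqnn. Qed.

Lemma connected_nonvanishing (g : 'rV[R]_n) : B_connected K i -> g != 0 ->
  (forall j b c, g ord0 j = 0 -> fa j \subset fb b -> fa c \subset fb b -> g ord0 c = 0) ->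
  forall a, g ord0 a != 0.
Proof.
move=> conn g0 spread a; apply: contraNneq g0 => ga0; apply/eqP/rowP => c; rewrite mxE.
pose Z (X : {set V}) := forall c, fa c \subset X -> g ord0 c = 0.
have Z_step (X Y : {set V}) : Z X -> B_adj K i X Y -> Z Y.
  move=> ZX /B_adjP[[XS YS sXY] | [YS XS sYX] c' sc]; last exact: ZX (fintype.subset_trans sc sYX).
  have [j Xj] := face_onto XS; have [b Yb] := face_onto YS; subst X Y.
  by move=> c' sc; apply: spread (ZX j (subxx _)) sXY sc.
have Z_path p X : Z X -> path (B_adj K i) X p -> Z (last X p).
  by elim: p X => [|Y p IH] X //= ZX /andP[eXY pY]; apply: IH pY; exact: Z_step ZX eXY.
have /connectP[p pth lp] : connect (B_adj K i) (fa a) (fa c).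
  by apply: conn; rewrite inE enum_valP.
have Za : Z (fa a) by move=> c' /face_lo_sub_eq ->.
by have := Z_path p _ Za pth; rewrite -lp; apply; exact: subxx.
Qed.

Lemma Dmx_sign (y : 'rV[R]_n) b a : (forall a, y ord0 a != 0) ->
  `|\sum_c D b c * y ord0 c| = \sum_c `|D b c * y ord0 c| -> fa a \subset fb b ->
  D b a = (-1) ^+ (\sum_c D b c * y ord0 c < 0)%R * (-1) ^+ (y ord0 a < 0)%R.
Proof.
move=> y_neq0 eq_norm sab.
have := norm_sum_eq_sign eq_norm a; rewrite normrM normDmx sab mul1r normrEsign mulrA.
by move/(mulIf (y_neq0 a)) => ->; rewrite mulrA -expr2 sqrr_sign mul1r.
Qed.

Definition face_ext (u : 'I_n -> R) (t : 'I_m -> R) (X : {set V}) : R :=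
  if [pick a | fa a == X] is Some a then u a
  else if [pick b | fb b == X] is Some b then t b else 1.

Lemma face_ext_lo u t a : face_ext u t (fa a) = u a.
Proof. by rewrite /face_ext; case: pickP => [a' /eqP/enum_val_inj -> | /(_ a)/eqP]. Qed.

Lemma face_ext_hi u t b : face_ext u t (fb b) = t b.
Proof.
rewrite /face_ext; case: pickP => [a /eqP fab | _].
  by have := enum_valP a; rewrite -[enum_val a]/(fa a) fab face_hi_notin_S.
by case: pickP => [b' /eqP/enum_val_inj -> | /(_ b)/eqP].
Qed.

Lemma faces_switching_balanced (u : 'I_n -> R) (t : 'I_m -> R) :
  (forall a, u a ^+ 2 = 1) -> (forall b, t b ^+ 2 = 1) ->
  (forall a b, fa a \subset fb b -> D b a = t b * u a) -> balanced R K o i.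
Proof.
move=> u2 t2 Dut; apply: (@switching_balanced _ _ _ _ (face_ext u t)).
  by move=> X; rewrite /face_ext; case: pickP => [a _ | _]; [|case: pickP => [b _ | _]];
     rewrite ?expr1n.
move=> X Y /B_adjP[[XS YS sXY] | [YS XS sYX]].
  have [a Xa] := face_onto XS; have [b Yb] := face_onto YS; subst X Y.
  by rewrite B_sign_faces face_ext_lo face_ext_hi Dut // mulrC.
have [a Ya] := face_onto YS; have [b Xb] := face_onto XS; subst X Y.
by rewrite B_sign_sym B_sign_faces face_ext_lo face_ext_hi Dut.
Qed.

End Faces.

Section Laplacian.
Variables (V : finType) (R : realType) (K : {set {set V}}) (o : {set V} -> seq V)
  (w : {set V} -> R) (i : nat).
Hypothesis w_gt0 : forall F, F \in K -> 0 < w F.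

Local Notation n := #|S K i|.
Local Notation m := #|S K i.+1|.
Local Notation D := (Dmx R K o i).
Local Notation fa := (@face V K i).
Local Notation fb := (@face V K i.+1).
Local Notation w_lo := (fun a : 'I_n => w (fa a)).
Local Notation w_hi := (fun b : 'I_m => w (fb b)).
Local Notation AL := (gram w_hi D).
Local Notation AQ := (gram w_hi (map_mx Num.norm D)).
Local Notation absv g := (map_mx Num.norm g).

Lemma w_lo_gt0 a : 0 < w_lo a. Proof. exact/w_gt0/face_in_K. Qed.
Lemma w_hi_gt0 b : 0 < w_hi b. Proof. exact/w_gt0/face_in_K. Qed.

Lemma LupE : Lup K o w i = invmx (diag_mx (\row_a w_lo a)) *m AL.
Proof. by rewrite /Lup /gram !mulmxA. Qed.

Lemma QupE : Qup K o w i = invmx (diag_mx (\row_a w_lo a)) *m AQ.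
Proof. by rewrite /Qup /gram !mulmxA. Qed.

Variables (lL lQ : R).
Hypothesis lL_max : is_lambda_max (Lup K o w i) lL.
Hypothesis lQ_max : is_lambda_max (Qup K o w i) lQ.

Lemma rayleigh_Lup : [/\ forall g, qform AL g <= lL * wnorm2 w_lo g,
  exists2 y, y != 0 & qform AL y = lL * wnorm2 w_lo y &
  forall g, qform AL g = lL * wnorm2 w_lo g -> g *m AL = lL *: (g *m diag_mx (\row_a w_lo a))].
Proof. by apply: rayleigh_lambda_max; [exact: w_lo_gt0 | exact: gram_sym | rewrite -LupE]. Qed.

Lemma rayleigh_Qup : [/\ forall g, qform AQ g <= lQ * wnorm2 w_lo g,
  exists2 y, y != 0 & qform AQ y = lQ * wnorm2 w_lo y &
  forall g, qform AQ g = lQ * wnorm2 w_lo g -> g *m AQ = lQ *: (g *m diag_mx (\row_a w_lo a))].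
Proof. by apply: rayleigh_lambda_max; [exact: w_lo_gt0 | exact: gram_sym | rewrite -QupE]. Qed.

Lemma lambda_max_Lup_le_Qup : lL <= lQ.
Proof.
have [_ [y y0 yL] _] := rayleigh_Lup; have [Q_le _ _] := rayleigh_Qup.
have := le_trans (qform_gram_le_abs D w_hi_gt0 y) (Q_le (absv y)).
by rewrite yL wnorm2_abs ler_pM2r // wnorm2_gt0 //; exact: w_lo_gt0.
Qed.

Lemma balanced_lambda_max_Qup_le_Lup : balanced R K o i -> lQ <= lL.
Proof.
move=> /balanced_B_switching [s [s2 sw]].
have [L_le _ _] := rayleigh_Lup; have [_ [y y0 yQ] _] := rayleigh_Qup.
have := L_le (\row_a (s (fa a) * y ord0 a)).
rewrite (qform_gram_switch _ (t := fun b => s (fb b))) // => [|b a]; last exact: Dmx_switch.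
have -> : wnorm2 w_lo (\row_a (s (fa a) * y ord0 a)) = wnorm2 w_lo y.
  by apply: eq_bigr => a _; rewrite !mxE mulrACA -expr2 s2 mul1r.
by rewrite yQ ler_pM2r // wnorm2_gt0 //; exact: w_lo_gt0.
Qed.

Lemma lambda_max_eq_balanced : B_connected K i -> lL = lQ -> balanced R K o i.
Proof.
move=> conn eqLQ; have [_ [y y0 yL] _] := rayleigh_Lup; have [Q_le _ Q_stat] := rayleigh_Qup.
have yQ : qform AQ (absv y) = lQ * wnorm2 w_lo (absv y).
  apply/le_anti; rewrite Q_le wnorm2_abs -eqLQ -yL.
  exact: qform_gram_le_abs w_hi_gt0 y.
have yLQ : qform AL y = qform AQ (absv y) by rewrite yL yQ wnorm2_abs eqLQ.
have absy_neq0 : forall a, (absv y) ord0 a != 0.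
  apply: (connected_nonvanishing (g := absv y)) => // [|j b c yj sjb scb].
    apply: contraNneq y0 => /rowP y_eq0; apply/eqP/rowP => a.
    by have := y_eq0 a; rewrite !mxE => /normr0_eq0.
  apply: (gram_abs_stationary_support (b := b) w_hi_gt0 _ (Q_stat _ yQ) yj).
  - by move=> a; rewrite mxE.
  - by rewrite Dmx_eq0 negbK.
  - by rewrite Dmx_eq0 negbK.
have y_neq0 a : y ord0 a != 0 by have := absy_neq0 a; rewrite mxE normr_eq0.
apply: (faces_switching_balanced (u := fun a => (-1) ^+ (y ord0 a < 0)%R)
  (t := fun b => (-1) ^+ (\sum_c D b c * y ord0 c < 0)%R)) => [a | b | a b sab].
- exact: sqrr_sign.
- exact: sqrr_sign.
- exact: Dmx_sign (qform_gram_abs_eq w_hi_gt0 yLQ b) sab.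
Qed.

End Laplacian.

Theorem mainTheorem2 (V : finType) (R : realType) (K : {set {set V}})
  (o : {set V} -> seq V) (w : {set V} -> R) (i : nat)
  (hK : simplicial_complex K) (ho : orientation K o)
  (hw : forall F, F \in K -> 0 < w F)
  (lL lQ : R)
  (hL : is_lambda_max (Lup K o w i) lL)
  (hQ : is_lambda_max (Qup K o w i) lQ) :
  [/\ lL <= lQ,
      (balanced R K o i -> lL = lQ) &
      (B_connected K i -> (lL = lQ <-> balanced R K o i))].
Proof.
have L_le_Q := lambda_max_Lup_le_Qup hw hL hQ.
have eq_of_balanced : balanced R K o i -> lL = lQ.
  by move=> bal; apply/le_anti; rewrite L_le_Q (balanced_lambda_max_Qup_le_Lup hw hL hQ bal).
split=> // conn; split=> [|/eq_of_balanced //].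
exact: (lambda_max_eq_balanced hw hL hQ conn).
Qed.
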